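(* Let $(E,\mathcal{E},\nu)$ be a $\sigma$-finite measure space, $\phi$ a Young function satisfying the $\Delta_2$-condition, $w$ a weight function, and $\Psi:E\to E$ a non-singular measurable transformation inducing the composition operator $C_\Psi f=f\circ\Psi$ on the Orlicz-Lorentz space $L_{(\phi,w)}$, such that $\Psi(S)\in\mathcal{E}$ for every $S\in\mathcal{E}$. If $\mathcal{A}(C_\Psi)=\infty$, then there exists a sequence $(A_m)$ of measurable subsets of $E$ such that for all $m>1$: (1) $0<\nu(A_m)<\infty$; (2) $A_m\subseteq\Psi^{m-1}(B)$ for some $B\in\mathcal{E}$; (3) $A_m\notin\{\Psi^m(S): S\in\mathcal{E},\ \nu(S)>0\}$.
   Context: A Young function is a convex $\phi:[0,\infty)\to[0,\infty)$ with $\phi(x)=0\iff x=0$ and $\lim_{x\to\infty}\phi(x)=\infty$; $\Delta_2$-condition: $\phi(2x)\le k\phi(x)$ for some $k>0$ and all $x>0$. A weight function is a non-increasing locally integrable $w:(0,\infty)\to(0,\infty)$ with $\int_0^\infty w=\infty$. For measurable $f$, $\nu_f(s)=\nu\{|f|>s\}$, $f^*(t)=\inf\{s>0:\nu_f(s)\le t\}$; $L_{(\phi,w)}$ is the space of measurable $f:E\to\mathbb{C}$ with $\int_0^\infty\phi(\alpha f^*(t))w(t)\,dt<\infty$ for some $\alpha>0$, with the Luxemburg norm. $\Psi$ non-singular: $\nu(\Psi^{-1}(S))=0$ whenever $\nu(S)=0$; $\Psi^0=\mathrm{id}$. The ascent $\mathcal{A}(T)$ is the smallest integer $m$ with $\mathcal{N}(T^m)=\mathcal{N}(T^{m+1})$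 ($\mathcal{N}$ = kernel), and $\infty$ if no such $m$ exists. *)

From HB Require Import structures.
From mathcomp Require Import all_boot all_order all_algebra.
From mathcomp Require Import all_classical all_reals all_analysis.
From mathcomp Require Import complex.

Set Implicit Arguments.
Unset Strict Implicit.
Unset Printing Implicit Defensive.
Import Order.TTheory GRing.Theory Num.Theory.
Local Open Scope classical_set_scope.
Local Open Scope ring_scope.

Section OrliczLorentz.
Variable R : realType.

Definition cre (z : R[i]) : R := let: Complex a _ := z in a.
Definition cim (z : R[i]) : R := let: Complex _ b := z in b.
Definition cabs (z : R[i]) : R := Num.sqrt (cre z ^+ 2 + cim z ^+ 2).

(** Young function: phi : [0,oo) -> [0,oo), convex, phi x = 0 <-> x = 0,
    phi x -> oo as x -> oo (only the values on [0,oo) matter). *)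
Definition young_function (phi : R -> R) : Prop :=
  (forall x, 0 <= x -> 0 <= phi x) /\
  (forall x y t, 0 <= x -> 0 <= y -> 0 <= t <= 1 ->
     phi (t * x + (1 - t) * y) <= t * phi x + (1 - t) * phi y) /\
  (forall x, 0 <= x -> (phi x = 0 <-> x = 0)) /\
  (phi x @[x --> +oo] --> +oo).

Definition delta2 (phi : R -> R) : Prop :=
  exists k : R, 0 < k /\ forall x, 0 < x -> phi (2 * x) <= k * phi x.

Definition weight_function (w : R -> R) : Prop :=
  (forall t, 0 < t -> 0 < w t) /\
  (forall s t, 0 < s -> s <= t -> w t <= w s) /\
  (forall t, 0 < t ->
     (@lebesgue_measure R).-integrable
        `]0, t[ (fun x => (w x)%:E)) /\
  ((\int[lebesgue_measure]_(x in `]0%R, +oo[%classic) (w x)%:E)%E = +oo%E).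

Definition phiE (phi : R -> R) (x : \bar R) : \bar R :=
  match x with
  | r%:E => (phi r)%:E
  | +oo%E => +oo%E
  | -oo%E => 0%E
  end.

Variables (d : measure_display) (E : measurableType d).

Definition cmeasurable (f : E -> R[i]) : Prop :=
  measurable_fun setT (fun x => cre (f x)) /\
  measurable_fun setT (fun x => cim (f x)).

Definition distrib (nu : {measure set E -> \bar R}) (f : E -> R[i]) (s : R)
  : \bar R := nu [set x | s < cabs (f x)].

Definition rearr (nu : {measure set E -> \bar R}) (f : E -> R[i]) (t : R)
  : \bar R :=
  ereal_inf [set s%:E | s in [set s : R | 0 < s /\ (distrib nu f s <= t%:E)%E]].

Definition orlicz_lorentz (nu : {measure set E -> \bar R}) (phi w : R -> R)
  : set (E -> R[i]) :=
  [set f | cmeasurable f /\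
     exists alpha : R, 0 < alpha /\
       ((\int[lebesgue_measure]_(t in `]0%R, +oo[%classic)
          (phiE phi (alpha%:E * rearr nu f t) * (w t)%:E))%E < +oo)%E].

Definition non_singular (nu : {measure set E -> \bar R}) (Psi : E -> E) : Prop :=
  forall S, measurable S -> nu S = 0%E -> nu (Psi @^-1` S) = 0%E.

Definition comp_kernel (nu : {measure set E -> \bar R}) (phi w : R -> R)
  (Psi : E -> E) (m : nat) : set (E -> R[i]) :=
  [set f | orlicz_lorentz nu phi w f /\
           {ae nu, forall x, f (iter m Psi x) = 0}].

Definition ascent_infinite (nu : {measure set E -> \bar R}) (phi w : R -> R)
  (Psi : E -> E) : Prop :=
  ~ exists m : nat, comp_kernel nu phi w Psi m = comp_kernel nu phi w Psi m.+1.

End OrliczLorentz.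

From HB Require Import structures.
From mathcomp Require Import all_boot all_order all_algebra.
From mathcomp Require Import all_classical all_reals all_analysis.
From mathcomp Require Import complex.
Import Order.TTheory GRing.Theory Num.Theory.
Local Open Scope classical_set_scope.
Local Open Scope ring_scope.

(* Since the ascent is infinite, for every m there is an f in the kernel of
   C_Psi^m but not of C_Psi^(m-1).  With D = {f <> 0}, the set
   W = Psi^(m-1)^-1(D) is not null while Psi^m^-1(D) is null.  By
   non-singularity the image Psi^(m-1)(W), a subset of D, is not null either,
   and sigma-finiteness cuts out of it a subset A of finite positive measure.
   If A were Psi^m(S), then S would lie in the null set Psi^m^-1(D). *)

Lemma measurable_preimage {d1 d2} {T : measurableType d1}
    {U : measurableType d2} {g : T -> U} {S : set U} :
  measurable_fun setT g -> measurable S -> measurable (g @^-1` S).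
Proof. by move=> mg mS; rewrite -[_ @^-1` _]setTI; exact: mg. Qed.

Section non_singular_transformations.
Context {R : realType} {d : measure_display} {E : measurableType d}
  {nu : {measure set E -> \bar R}}.

Lemma non_singular_comp (f g : E -> E) :
  measurable_fun setT f -> non_singular nu f -> non_singular nu g ->
  non_singular nu (f \o g).
Proof.
move=> mf nsf nsg S mS S0.
by apply: (nsg (f @^-1` S)); [exact: measurable_preimage | exact: nsf].
Qed.

Lemma non_singular_negligible (g : E -> E) N :
  measurable_fun setT g -> non_singular nu g ->
  nu.-negligible N -> nu.-negligible (g @^-1` N).
Proof.
move=> mg nsg [M [mM M0 NM]]; exists (g @^-1` M); split.
- exact: measurable_preimage.
- exact: nsg.
- by move=> x /NM.
Qed.

Lemma ae_comp (g : E -> E) (P : E -> Prop) :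
  measurable_fun setT g -> non_singular nu g ->
  {ae nu, forall x, P x} -> {ae nu, forall x, P (g x)}.
Proof. exact: non_singular_negligible. Qed.

Lemma non_singular_image_neq0 (g : E -> E) S :
  measurable_fun setT g -> non_singular nu g ->
  measurable S -> measurable (g @` S) -> nu S != 0%E -> nu (g @` S) != 0%E.
Proof.
move=> mg nsg mS mgS; apply: contra_neq => gS0.
apply/negligibleP => //; apply: (@negligibleS _ _ _ _ (g @^-1` (g @` S))).
  by move=> x Sx; exists x.
by apply/negligibleP; [exact: measurable_preimage | exact: nsg].
Qed.

Lemma sigma_finite_pos_finite_subset A :
  sigma_finite setT nu -> measurable A -> nu A != 0%E ->
  exists B, [/\ measurable B, B `<=` A & (0 < nu B)%E /\ (nu B < +oo)%E].
Proof.
move=> [F FT mF] mA; apply: contra_neqP => noB.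
have mAF i : measurable (A `&` F i) by apply: measurableI => //; case: (mF i).
apply/negligibleP => //; rewrite -[A]setIT FT setI_bigcupr.
apply: negligible_bigcup => i; apply/negligibleP => //.
apply: contra_notP noB => AFi0; exists (A `&` F i); split=> //.
split; first by rewrite lt0e measure_ge0 andbT; exact/eqP.
by apply: le_lt_trans (proj2 (mF i)); rewrite le_measure ?inE //; case: (mF i).
Qed.

Lemma measurable_nonzero (f : E -> R[i]) :
  cmeasurable f -> measurable [set y | f y <> 0].
Proof.
move=> [mre mim].
have -> : [set y | f y <> 0] =
    (fun y => cre (f y)) @^-1` [set~ 0] `|` (fun y => cim (f y)) @^-1` [set~ 0].
  apply/seteqP; split => y /=; case: (f y) => a b /=.
    have [->|] := eqVneq a 0; last by left; exact/eqP.
    have [->|] := eqVneq b 0; last by right; exact/eqP.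
    by [].
  by move=> [] ab [] ? ?.
by apply: measurableU; apply: measurable_preimage => //; exact: measurableC.
Qed.

Lemma ae_comp_eq0P (f : E -> R[i]) (g : E -> E) :
  cmeasurable f -> measurable_fun setT g ->
  {ae nu, forall x, f (g x) = 0} <-> nu (g @^-1` [set y | f y <> 0]) = 0%E.
Proof.
move=> mf mg.
exact (negligibleP nu (measurable_preimage mg (measurable_nonzero _ mf))).
Qed.

Context {Psi : E -> E}.
Hypothesis mPsi : measurable_fun setT Psi.
Hypothesis nsPsi : non_singular nu Psi.
Hypothesis mimPsi : forall S, measurable S -> measurable (Psi @` S).

Lemma measurable_iter n : measurable_fun setT (iter n Psi).
Proof.
by elim: n => [|n IHn]; [exact: measurable_id | exact: measurableT_comp mPsi IHn].
Qed.

Lemma non_singular_iter n : non_singular nu (iter n Psi).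
Proof.
elim: n => [|n IHn] /=; first by move=> S _ S0.
exact: non_singular_comp.
Qed.

Lemma measurable_image_iter n S : measurable S -> measurable (iter n Psi @` S).
Proof.
move=> mS; elim: n => [|n IHn] /=; first by rewrite image_id.
by rewrite -[X in measurable X]image_comp; exact: mimPsi.
Qed.

Lemma comp_kernel_subS phi w m :
  comp_kernel nu phi w Psi m `<=` comp_kernel nu phi w Psi m.+1.
Proof.
move=> f [Lf aef]; split => //.
by apply: filterS (ae_comp _ _ mPsi nsPsi aef) => x; rewrite iterSr.
Qed.

Lemma ascent_infinite_witness {phi w} : ascent_infinite nu phi w Psi ->
  forall m, exists f, comp_kernel nu phi w Psi m.+1 f /\ ~ comp_kernel nu phi w Psi m f.
Proof.
move=> asc m; apply: contrapT => nof; apply: asc; exists m.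
apply/seteqP; split; first exact: comp_kernel_subS.
by move=> f Kf; apply: contrapT => nKf; apply: nof; exists f.
Qed.

Lemma exists_set_not_image k D :
  sigma_finite setT nu -> measurable D ->
  nu (iter k Psi @^-1` D) != 0%E -> nu (iter k.+1 Psi @^-1` D) = 0%E ->
  exists A, [/\ measurable A,
    (0 < nu A)%E /\ (nu A < +oo)%E,
    (exists B, measurable B /\ A `<=` iter k Psi @` B) &
    ~ (exists S, measurable S /\ (0 < nu S)%E /\ A = iter k.+1 Psi @` S)].
Proof.
move=> nu_sfin mD W0 D0; set W := iter k Psi @^-1` D.
have mW : measurable W by apply: measurable_preimage => //; exact: measurable_iter.
have mPsiW : measurable (iter k Psi @` W) by exact: measurable_image_iter.
have PsiW0 : nu (iter k Psi @` W) != 0%E.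
  by apply: non_singular_image_neq0 => //;
    [exact: measurable_iter | exact: non_singular_iter].
have [A [mA AW Apos]] := sigma_finite_pos_finite_subset _ nu_sfin mPsiW PsiW0.
exists A; split => //; first by exists W; split.
move=> [S [mS [S0 AS]]].
have SD : S `<=` iter k.+1 Psi @^-1` D.
  move=> x Sx; have : A (iter k.+1 Psi x) by rewrite AS; exists x.
  by move=> /AW [y Wy Ey]; move: Wy; rewrite /W /preimage /= Ey.
have mPsiD : measurable (iter k.+1 Psi @^-1` D).
  by apply: measurable_preimage => //; exact: measurable_iter.
have : (nu S <= 0)%E by rewrite -D0 le_measure ?inE.
by rewrite leNgt S0.
Qed.

End non_singular_transformations.

Theorem theorem3p9 (R : realType) (d : measure_display) (E : measurableType d)
  (nu : {measure set E -> \bar R}) (phi w : R -> R) (Psi : E -> E) :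
  sigma_finite setT nu ->
  young_function phi -> delta2 phi ->
  weight_function w ->
  measurable_fun setT Psi ->
  non_singular nu Psi ->
  (forall f, orlicz_lorentz nu phi w f -> orlicz_lorentz nu phi w (f \o Psi)) ->
  (forall S, measurable S -> measurable (Psi @` S)) ->
  ascent_infinite nu phi w Psi ->
  exists A : nat -> set E,
    forall m : nat, (1 < m)%N ->
      [/\ measurable (A m),
          (0 < nu (A m))%E /\ (nu (A m) < +oo)%E,
          (exists B, measurable B /\ A m `<=` iter m.-1 Psi @` B) &
          ~ (exists S, measurable S /\ (0 < nu S)%E /\ A m = iter m Psi @` S)].
Proof.
move=> nu_sfin _ _ _ mPsi nsPsi _ mimPsi asc.
suff witness k : exists A : set E, [/\ measurable A,
    (0 < nu A)%E /\ (nu A < +oo)%E,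
    (exists B, measurable B /\ A `<=` iter k Psi @` B) &
    ~ (exists S, measurable S /\ (0 < nu S)%E /\ A = iter k.+1 Psi @` S)].
  have [A HA] := choice witness.
  by exists (fun m => A m.-1) => -[//|m] _; exact: HA.
have [f [[Lf aef] nKf]] := ascent_infinite_witness mPsi nsPsi asc k.
have mf : cmeasurable f := proj1 Lf.
have mD := measurable_nonzero f mf.
apply: (exists_set_not_image mPsi nsPsi mimPsi k _ nu_sfin mD).
- apply/eqP => /(ae_comp_eq0P f _ mf (measurable_iter mPsi k)) aef0.
  exact: nKf (conj Lf aef0).
- exact/(ae_comp_eq0P f _ mf (measurable_iter mPsi k.+1)).
Qed.
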